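(* $\pi(e_{n,1}^{(n)})=\pi(z)$ and $\pi(f_{n,1}^{(n)})=\pi(H_0)$.
   Context: Let $\mathfrak g=Q(n)$ with even basis $e_{i,j}$, odd basis $f_{i,j}$, $z=\sum_ie_{i,i}$, $H_0=\sum_{i=1}^{n}(-1)^{i-1}f_{i,i}$. Let $\chi(x)=\mathrm{otr}(xE)$ with $E=\sum_{i=1}^{n-1}f_{i,i+1}$, $\mathfrak m$ spanned by $e_{i,j},f_{i,j}$ ($i>j$), $\chi(e_{i+1,i})=1$ and $\chi=0$ on the other basis vectors of $\mathfrak m$, $I_\chi$ the left ideal of $U(\mathfrak g)$ generated by $a-\chi(a)$ ($a\in\mathfrak m$), and $\pi:U(\mathfrak g)\to U(\mathfrak g)/I_\chi$ the projection. Sergeev's elements: $e_{i,j}^{(1)}=e_{i,j}$, $f_{i,j}^{(1)}=f_{i,j}$, $e_{i,j}^{(m)}=\sum_k e_{i,k}e_{k,j}^{(m-1)}+(-1)^{m+1}\sum_k f_{i,k}f_{k,j}^{(m-1)}$, $f_{i,j}^{(m)}=\sum_k e_{i,k}f_{k,j}^{(m-1)}+(-1)^{m+1}\sum_k f_{i,k}e_{k,j}^{(m-1)}$. *)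

From HB Require Import structures.
From mathcomp Require Import all_boot all_order all_algebra.
Set Implicit Arguments. Unset Strict Implicit. Unset Printing Implicit Defensive.
Import GRing.Theory Num.Theory.
Local Open Scope ring_scope.

(* Basis of Q(n) (indices 1..n, as in the paper):
   (false,i,j) stands for the even vector e_{i,j},
   (true ,i,j) stands for the odd  vector f_{i,j}. *)
Definition gen := (bool * nat * nat)%type.
Definition ge (i j : nat) : gen := (false, i, j).
Definition gf (i j : nat) : gen := (true, i, j).
Definition parity (x : gen) : bool := x.1.1.

Definition gens (n : nat) : seq gen :=
  flatten [seq [seq (b, i, j) | i <- iota 1 n, j <- iota 1 n] | b <- [:: false; true]].

Section FreeAlg.
Variable K : numClosedFieldType.

(* Elements of the tensor algebra T(g) = free associative algebra on the basis
   of g, written as formal finite linear combinations of words; two such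
   expressions are equal iff all their coefficients agree (nceq). *)
Definition ncpoly := seq (K * seq gen).

Definition ncadd (p q : ncpoly) : ncpoly := p ++ q.
Definition ncscale (c : K) (p : ncpoly) : ncpoly := [seq (c * t.1, t.2) | t <- p].
Definition ncopp (p : ncpoly) : ncpoly := ncscale (-1) p.
Definition ncsub (p q : ncpoly) : ncpoly := ncadd p (ncopp q).
Definition ncmul (p q : ncpoly) : ncpoly :=
  [seq (t.1 * s.1, t.2 ++ s.2) | t <- p, s <- q].
Definition ncword (w : seq gen) : ncpoly := [:: (1, w)].
Definition ncgen (x : gen) : ncpoly := ncword [:: x].
Definition ncconst (c : K) : ncpoly := [:: (c, [::])].
Definition nccoef (p : ncpoly) (w : seq gen) : K := \sum_(t <- p | t.2 == w) t.1.
Definition nceq (p q : ncpoly) : Prop := forall w, nccoef p w = nccoef q w.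

Definition delta (a b : nat) : K := (a == b)%:R.
Definition sgn (b : bool) : K := (-1) ^+ b.

(* Super bracket of basis vectors of Q(n) (realized inside gl(n|n) by
   e_{ij} = E_{ij}+E_{n+i,n+j}, f_{ij} = E_{i,n+j}+E_{n+i,j}):
   [x_{ij}, y_{kl}] = d_{jk} (xy)_{il} - (-1)^{|x||y|} d_{li} (xy)_{kj},
   i.e. [e,e'], [e,f], [f,e] are the usual commutators and
   [f_{ij}, f_{kl}] = d_{jk} e_{il} + d_{li} e_{kj}. *)
Definition sbracket (x y : gen) : ncpoly :=
  let: (p1, i, j) := x in let: (p2, k, l) := y in
  ncadd (ncscale (delta j k) (ncgen (addb p1 p2, i, l)))
        (ncscale (- sgn (p1 && p2) * delta l i) (ncgen (addb p1 p2, k, j))).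

Definition urel (x y : gen) : ncpoly :=
  ncsub (ncsub (ncmul (ncgen x) (ncgen y))
               (ncscale (sgn (parity x && parity y)) (ncmul (ncgen y) (ncgen x))))
        (sbracket x y).

Definition Jgens (n : nat) : seq ncpoly :=
  [seq urel x y | x <- gens n, y <- gens n].

Definition chi (x : gen) : K :=
  let: (b, i, j) := x in if b then 0 else delta i j.+1.

Definition mgens (n : nat) : seq gen := [seq x <- gens n | (x.2 < x.1.2)%N].

Definition Mgens (n : nat) : seq ncpoly :=
  [seq ncsub (ncgen x) (ncconst (chi x)) | x <- mgens n].

(* p lies in the left ideal of T(g) generated by the two-sided ideal of the
   relations of U(g) and by the a - chi(a), a in m; i.e. the image of p in
   U(g) lies in I_chi. *)
Definition inLeftIdeal (n : nat) (p : ncpoly) : Prop :=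
  exists (A : seq (K * seq gen * ncpoly * seq gen)) (B : seq (K * seq gen * ncpoly)),
    all (fun t => t.1.2 \in Jgens n) A /\
    all (fun t => t.2 \in Mgens n) B /\
    nceq p (ncadd
      (\big[ncadd/[::]]_(t <- A)
          ncscale t.1.1.1 (ncmul (ncmul (ncword t.1.1.2) t.1.2) (ncword t.2)))
      (\big[ncadd/[::]]_(t <- B) ncscale t.1.1 (ncmul (ncword t.1.2) t.2))).

Definition piEq (n : nat) (p q : ncpoly) : Prop := inLeftIdeal n (ncsub p q).

Definition ncsum (n : nat) (F : nat -> ncpoly) : ncpoly :=
  \big[ncadd/[::]]_(1 <= k < n.+1) F k.

(* serg n m b i j = e_{ij}^{(m+1)} if b = false, f_{ij}^{(m+1)} if b = true. *)
Fixpoint serg (n m : nat) (b : bool) (i j : nat) : ncpoly :=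
  match m with
  | 0 => ncgen (b, i, j)
  | m'.+1 =>
      ncadd (ncsum n (fun k => ncmul (ncgen (ge i k)) (serg n m' b k j)))
            (ncscale (sgn (odd (m'.+2).+1))
               (ncsum n (fun k => ncmul (ncgen (gf i k)) (serg n m' (~~ b) k j))))
  end.

Definition sergeev (n m : nat) (b : bool) (i j : nat) : ncpoly := serg n m.-1 b i j.

Definition zel (n : nat) : ncpoly := ncsum n (fun i => ncgen (ge i i)).
Definition H0 (n : nat) : ncpoly :=
  ncsum n (fun i => ncscale (sgn (odd i.-1)) (ncgen (gf i i))).

End FreeAlg.

From HB Require Import structures.
From mathcomp Require Import all_boot all_order all_algebra.
From mathcomp Require Import boolp zify.
Set Implicit Arguments. Unset Strict Implicit. Unset Printing Implicit Defensive.
Import GRing.Theory.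
Local Open Scope ring_scope.

(* Write y^{(m)}_{cd} for e^{(m)}_{cd} or f^{(m)}_{cd} (parity b), y' for the element of the
   opposite parity, and x_{pq} for a basis vector of parity a.  By induction on m, using the
   super-Leibniz rule and the recursion y^{(m+1)}_{cd} = sum_k e_{ck} y^{(m)}_{kd} +- f_{ck} y'^{(m)}_{kd},
   the super-commutator [x_{pq}, y^{(m)}_{cd}] in U(g) is given by the formula for m = 1 up to
   the sign (-1)^{a(m-1)}.  The dual recursion y^{(m+1)}_{ij} = sum_k e^{(m)}_{ik} x_{kj} -
   f^{(m)}_{ik} x'_{kj} (x, x' of parities b, 1-b) then allows one to move every x_{kj} with
   k <= j to the left, while those with k > j lie in m and are replaced by chi(x_{kj}).  Modulo
   I_chi this shows, by induction on m, that the entries (i, j) of y^{(m+1)} with i > j + m are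
   constants and those with i = j + m are alternating sums of diagonal basis vectors; the entry
   (n, 1) of y^{(n)} is the theorem.  All computations are made in the algebra of noncommutative
   formal series on the basis of g, which contains the tensor algebra. *)

Lemma sum_nat_triangle (V : nmodType) (F : nat -> nat -> V) N :
  \sum_(0 <= k < N.+1) \sum_(0 <= l < k.+1) F l (k - l)%N =
  \sum_(0 <= l < N.+1) \sum_(0 <= j < (N - l).+1) F l j.
Proof.
elim: N => [|N IH]; first by rewrite !big_nat1.
rewrite big_nat_recr //= IH [RHS]big_nat_recr //= subnn big_nat1.
rewrite [\sum_(0 <= l < N.+2) _]big_nat_recr //= subnn addrA; congr (_ + _).
rewrite -big_split /=; apply: eq_big_nat => l /andP [_ hl].
by rewrite subSn // [RHS]big_nat_recr.
Qed.

Lemma sum_take_eq (A : eqType) (R : pzSemiRingType) (u w : seq A) (F : nat -> R) :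
  \sum_(0 <= k < (size w).+1) (u == take k w)%:R * F k =
  (take (size u) w == u)%:R * F (size u).
Proof.
have size_take_eq k : (k <= size w)%N -> u = take k w -> k = size u.
  by move=> hk ->; rewrite size_takel.
case: (boolP (take (size u) w == u)) => [/eqP huw | huw]; last first.
  rewrite mul0r big_nat_cond big1 // => k /andP [/andP [_ hk] _].
  case: (eqVneq u (take k w)) => [e | _]; last by rewrite mul0r.
  by rewrite -(size_take_eq k _ e) // -e eqxx in huw.
have hu : (size u <= size w)%N by rewrite -huw size_take_min geq_minr.
rewrite (bigD1_seq (size u)) ?mem_index_iota ?iota_uniq ?ltnS //= huw eqxx.
rewrite big1_seq ?addr0 // => k /andP [hk]; rewrite mem_index_iota ltnS => /andP [_ hkw].
by case: (eqVneq u (take k w)) => [e | _]; [rewrite -(size_take_eq k) ?eqxx in hk | rewrite mul0r].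
Qed.

Lemma cat_eq_take_drop (A : eqType) (u v w : seq A) :
  (u ++ v == w) = (take (size u) w == u) && (v == drop (size u) w).
Proof.
apply/eqP/andP => [<- | [/eqP hu /eqP ->]].
  by rewrite take_size_cat // drop_size_cat // !eqxx.
by rewrite -{1}hu cat_take_drop.
Qed.

Definition series (A : Type) (R : Type) := seq A -> R.
HB.instance Definition _ (A : Type) (R : choiceType) := Choice.on (series A R).

Section SeriesRing.
Variables (A : Type) (R : nzRingType).
Implicit Types f g h : series A R.

Definition series_add f g : series A R := fun w => f w + g w.
Definition series_opp f : series A R := fun w => - f w.
Definition series_zero : series A R := fun=> 0.

Lemma series_addA : associative series_add.
Proof. by move=> f g h; apply: funext => w; apply: addrA. Qed.
Lemma series_addC : commutative series_add.
Proof. by move=> f g; apply: funext => w; apply: addrC. Qed.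
Lemma series_add0 : left_id series_zero series_add.
Proof. by move=> f; apply: funext => w; apply: add0r. Qed.
Lemma series_addN : left_inverse series_zero series_opp series_add.
Proof. by move=> f; apply: funext => w; apply: addNr. Qed.

HB.instance Definition _ :=
  GRing.isZmodule.Build (series A R) series_addA series_addC series_add0 series_addN.

Lemma seriesDE f g w : (f + g) w = f w + g w. Proof. by []. Qed.
Lemma series0E w : (0 : series A R) w = 0. Proof. by []. Qed.

Lemma series_sumE (I : Type) (r : seq I) (P : pred I) (F : I -> series A R) w :
  (\sum_(i <- r | P i) F i) w = \sum_(i <- r | P i) F i w.
Proof. exact: (big_morph (@^~ w) (fun f g => seriesDE f g w) (series0E w)). Qed.

Definition series_mul f g : series A R := fun w =>
  \sum_(0 <= k < (size w).+1) f (take k w) * g (drop k w).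
Definition series_one : series A R := fun w => (nilp w)%:R.

Lemma series_mulA : associative series_mul.
Proof.
move=> f g h; apply: funext => w; rewrite /series_mul; symmetry.
pose F l j := f (take l w) * (g (take j (drop l w)) * h (drop j (drop l w))).
transitivity (\sum_(0 <= k < (size w).+1) \sum_(0 <= l < k.+1) F l (k - l)%N).
  apply: eq_big_nat => k /andP [_]; rewrite ltnS => hk.
  rewrite size_takel // mulr_suml; apply: eq_big_nat => l /andP [_]; rewrite ltnS => hl.
  by rewrite /F take_takel // -mulrA drop_drop subnK // take_drop subnK.
rewrite (sum_nat_triangle F); apply: eq_big_nat => l _.
by rewrite size_drop mulr_sumr.
Qed.

Lemma series_mul1 : left_id series_one series_mul.
Proof.
move=> f; apply: funext => w; rewrite /series_mul big_ltn //= take0 drop0 mul1r.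
rewrite big_nat_cond big1 ?addr0 // => k /andP [/andP [hk0 hkw] _].
by rewrite /series_one /nilp size_takel ?gtn_eqF ?mul0r // -ltnS.
Qed.

Lemma series_mulr1 : right_id series_one series_mul.
Proof.
move=> f; apply: funext => w; rewrite /series_mul big_nat_recr //= take_size.
rewrite drop_size mulr1 big_nat_cond big1 ?add0r // => k /andP [/andP [_ hkw] _].
by rewrite /series_one /nilp size_drop subn_eq0 leqNgt hkw mulr0.
Qed.

Lemma series_mulDl : left_distributive series_mul +%R.
Proof.
move=> f g h; apply: funext => w; rewrite seriesDE /series_mul -big_split.
by apply: eq_bigr => k _; apply: mulrDl.
Qed.

Lemma series_mulDr : right_distributive series_mul +%R.
Proof.
move=> f g h; apply: funext => w; rewrite seriesDE /series_mul -big_split.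
by apply: eq_bigr => k _; apply: mulrDr.
Qed.

Lemma series_one_neq0 : series_one != 0.
Proof. by apply/eqP => /(congr1 (@^~ [::])) /eqP; rewrite oner_eq0. Qed.

HB.instance Definition _ := GRing.Zmodule_isNzRing.Build (series A R)
  series_mulA series_mul1 series_mulr1 series_mulDl series_mulDr series_one_neq0.

Lemma seriesME f g w :
  (f * g) w = \sum_(0 <= k < (size w).+1) f (take k w) * g (drop k w).
Proof. by []. Qed.

End SeriesRing.

Section SeriesAlgebra.
Variables (A : Type) (R : comNzRingType).
Implicit Types f g : series A R.

Definition series_scale (c : R) f : series A R := fun w => c * f w.

Lemma series_scaleA a b f : series_scale a (series_scale b f) = series_scale (a * b) f.
Proof. by apply: funext => w; apply: mulrA. Qed.
Lemma series_scale1 : left_id 1 series_scale.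
Proof. by move=> f; apply: funext => w; apply: mul1r. Qed.
Lemma series_scaleDr : right_distributive series_scale +%R.
Proof. by move=> c f g; apply: funext => w; apply: mulrDr. Qed.
Lemma series_scaleDl f : {morph series_scale^~ f : a b / a + b}.
Proof. by move=> a b; apply: funext => w; apply: mulrDl. Qed.

HB.instance Definition _ := GRing.Zmodule_isLmodule.Build R (series A R)
  series_scaleA series_scale1 series_scaleDr series_scaleDl.

Lemma seriesZE c f w : (c *: f) w = c * f w. Proof. by []. Qed.

Lemma series_scaleAl c f g : c *: (f * g) = (c *: f) * g.
Proof.
apply: funext => w; rewrite seriesZE !seriesME mulr_sumr.
by apply: eq_bigr => k _; rewrite mulrA.
Qed.

Lemma series_scaleAr c f g : c *: (f * g) = f * (c *: g).
Proof.
apply: funext => w; rewrite seriesZE !seriesME mulr_sumr.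
by apply: eq_bigr => k _; rewrite !seriesZE mulrCA.
Qed.

HB.instance Definition _ := GRing.Lmodule_isLalgebra.Build R (series A R) series_scaleAl.
HB.instance Definition _ := GRing.Lalgebra_isAlgebra.Build R (series A R) series_scaleAr.

End SeriesAlgebra.

Section NcSeries.
Variable K : numClosedFieldType.
Local Notation S := (series gen K).
Implicit Types (p q : ncpoly K) (u v w : seq gen).

Definition ncseries p : S := nccoef p.
Definition word u : S := ncseries (ncword K u).

Lemma wordE u w : word u w = (u == w)%:R.
Proof. by rewrite /word /ncseries /nccoef big_cons big_nil addr0; case: eqP. Qed.

Lemma word_nil : word [::] = 1.
Proof. by apply: funext => w; rewrite wordE; case: w. Qed.

Lemma word_cat u v : word (u ++ v) = word u * word v.
Proof.
apply: funext => w; rewrite seriesME wordE.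
under eq_bigr do rewrite !wordE.
by rewrite sum_take_eq cat_eq_take_drop -mulnb natrM.
Qed.

Lemma ncseries_words p : ncseries p = \sum_(t <- p) t.1 *: word t.2.
Proof.
apply: funext => w; rewrite series_sumE /ncseries /nccoef big_mkcond /=.
by apply: eq_bigr => t _; rewrite seriesZE wordE; case: eqP; rewrite ?mulr1 ?mulr0.
Qed.

Lemma ncseries_add p q : ncseries (ncadd p q) = ncseries p + ncseries q.
Proof. by rewrite !ncseries_words big_cat. Qed.

Lemma ncseries_nil : ncseries [::] = 0.
Proof. by rewrite ncseries_words big_nil. Qed.

Lemma ncseries_big (I : Type) (r : seq I) (F : I -> ncpoly K) :
  ncseries (\big[@ncadd K/[::]]_(i <- r) F i) = \sum_(i <- r) ncseries (F i).
Proof. exact: (big_morph ncseries ncseries_add ncseries_nil). Qed.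

Lemma ncseries_scale c p : ncseries (ncscale c p) = c *: ncseries p.
Proof.
rewrite !ncseries_words big_map scaler_sumr.
by apply: eq_bigr => t _; rewrite scalerA.
Qed.

Lemma ncseries_sub p q : ncseries (ncsub p q) = ncseries p - ncseries q.
Proof. by rewrite ncseries_add ncseries_scale scaleN1r. Qed.

Lemma ncseries_const c : ncseries (ncconst c) = c%:A.
Proof. by rewrite ncseries_words big_seq1 word_nil. Qed.

Lemma ncseries_mul p q : ncseries (ncmul p q) = ncseries p * ncseries q.
Proof.
rewrite !ncseries_words big_allpairs_dep mulr_suml; apply: eq_bigr => t _.
rewrite mulr_sumr; apply: eq_bigr => s _ /=.
by rewrite word_cat -scalerAl -scalerAr scalerA.
Qed.

Definition ncpolys : {pred S} := fun F => `[< exists p, F = ncseries p >].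

Lemma ncseries_in p : ncseries p \in ncpolys.
Proof. by apply/asboolP; exists p. Qed.

Lemma ncpolys_subalg_closed : GRing.subsemialg_closed ncpolys.
Proof.
have closed2 op : (forall p q, exists r, op (ncseries p) (ncseries q) = ncseries r) ->
    {in ncpolys &, forall F G, op F G \in ncpolys}.
  by move=> h F G /asboolP [p ->] /asboolP [q ->]; have [r ->] := h p q; apply: ncseries_in.
split.
- by rewrite -[1]word_nil ncseries_in.
- split; first by rewrite -ncseries_nil ncseries_in.
  by apply: closed2 => p q; exists (ncadd p q); rewrite ncseries_add.
- by move=> c F /asboolP [p ->]; rewrite -ncseries_scale ncseries_in.
- by apply: closed2 => p q; exists (ncmul p q); rewrite ncseries_mul.
Qed.

HB.instance Definition _ := GRing.isSubalgClosed.Build K S ncpolys ncpolys_subalg_closed.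

End NcSeries.

Arguments ncpolys : clear implicits.

Section LinearSpan.
Variables (R : pzRingType) (V : lmodType R) (P : V -> Prop).

Definition lspan : {pred V} :=
  fun v => `[< exists s : seq (R * {x | P x}), v = \sum_(t <- s) t.1 *: sval t.2 >].

Lemma lspanP v :
  reflect (exists s : seq (R * {x | P x}), v = \sum_(t <- s) t.1 *: sval t.2) (v \in lspan).
Proof. exact: asboolP. Qed.

Lemma lspan_closed : GRing.subsemimod_closed lspan.
Proof.
split; [split|].
- by apply/lspanP; exists [::]; rewrite big_nil.
- move=> u v /lspanP [s ->] /lspanP [s' ->].
  by apply/lspanP; exists (s ++ s'); rewrite big_cat.
- move=> c v /lspanP [s ->]; apply/lspanP.
  exists [seq (c * t.1, t.2) | t <- s]; rewrite big_map scaler_sumr.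
  by apply: eq_bigr => t _; rewrite scalerA.
Qed.

HB.instance Definition _ := GRing.isSubmodClosed.Build R V lspan lspan_closed.

Lemma lspan_gen x : P x -> x \in lspan.
Proof.
by move=> Px; apply/lspanP; exists [:: (1, exist P x Px)]; rewrite big_seq1 scale1r.
Qed.

End LinearSpan.

Lemma lspan_sub (R : pzRingType) (V : lmodType R) (P Q : V -> Prop) :
  (forall x, P x -> Q x) -> {subset lspan P <= lspan Q}.
Proof.
move=> PQ v /lspanP [s ->]; apply: rpred_sum => t _.
by apply/rpredZ/lspan_gen/PQ; case: t.2.
Qed.

Section AlgebraSpan.
Variables (R : pzRingType) (A : algType R) (P : A -> Prop) (I : submodClosed A).

Lemma lspan_mull x :
  (forall y, P y -> x * y \in I) -> {in lspan P, forall y, x * y \in I}.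
Proof.
move=> hx y /lspanP [s ->]; rewrite mulr_sumr; apply: rpred_sum => t _.
by rewrite -scalerAr; apply/rpredZ/hx; case: t.2.
Qed.

Lemma lspan_mulr x :
  (forall y, P y -> y * x \in I) -> {in lspan P, forall y, y * x \in I}.
Proof.
move=> hx y /lspanP [s ->]; rewrite mulr_suml; apply: rpred_sum => t _.
by rewrite -scalerAl; apply/rpredZ/hx; case: t.2.
Qed.

End AlgebraSpan.

Section Congruence.
Variables (R : pzRingType) (V : lmodType R) (I : submodClosed V).
Implicit Types x y z : V.

Definition eqmod x y := x - y \in I.

Lemma submod_closedN x : x \in I -> - x \in I.
Proof. by rewrite -scaleN1r; apply: rpredZ. Qed.

Lemma eqmod_refl x : eqmod x x.
Proof. by rewrite /eqmod subrr rpred0. Qed.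

Lemma eqmod_eq x y : x = y -> eqmod x y.
Proof. by move=> ->; apply: eqmod_refl. Qed.

Lemma eqmod_trans y x z : eqmod x y -> eqmod y z -> eqmod x z.
Proof. by move=> hxy hyz; rewrite /eqmod -[x](subrK y) -addrA rpredD. Qed.

Lemma eqmodD x1 x2 y1 y2 : eqmod x1 y1 -> eqmod x2 y2 -> eqmod (x1 + x2) (y1 + y2).
Proof. by move=> h1 h2; rewrite /eqmod opprD addrACA rpredD. Qed.

Lemma eqmodN x y : eqmod x y -> eqmod (- x) (- y).
Proof. by move=> /submod_closedN; rewrite /eqmod opprD. Qed.

Lemma eqmodB x1 x2 y1 y2 : eqmod x1 y1 -> eqmod x2 y2 -> eqmod (x1 - x2) (y1 - y2).
Proof. by move=> h1 /eqmodN; apply: eqmodD. Qed.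

Lemma eqmodZ c x y : eqmod x y -> eqmod (c *: x) (c *: y).
Proof. by rewrite /eqmod -scalerBr; apply: rpredZ. Qed.

Lemma eqmod_sum (J : Type) (r : seq J) (P : pred J) (F G : J -> V) :
  (forall j, P j -> eqmod (F j) (G j)) ->
  eqmod (\sum_(j <- r | P j) F j) (\sum_(j <- r | P j) G j).
Proof. by move=> h; rewrite /eqmod -sumrB; apply: rpred_sum. Qed.

End Congruence.

Section NcpolysIdeal.
Variables (K : numClosedFieldType) (I : submodClosed (series gen K)).

Lemma ncpolys_mull y :
  (forall u, word K u * y \in I) -> {in ncpolys K, forall x, x * y \in I}.
Proof.
move=> hy x /asboolP [p ->]; rewrite ncseries_words mulr_suml.
by apply: rpred_sum => t _; rewrite -scalerAl rpredZ.
Qed.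

Lemma ncpolys_mulr y :
  (forall u, y * word K u \in I) -> {in ncpolys K, forall x, y * x \in I}.
Proof.
move=> hy x /asboolP [p ->]; rewrite ncseries_words mulr_sumr.
by apply: rpred_sum => t _; rewrite -scalerAr rpredZ.
Qed.

End NcpolysIdeal.

Section ChiIdeal.
Variables (K : numClosedFieldType) (n : nat).
Local Notation S := (series gen K).

(* [urel_ideal] is the two-sided ideal of the relations of U(g) and [chi_ideal] adds the left
   ideal generated by the a - chi(a), a in m: its image in U(g) is I_chi. *)
Definition urel_gen (F : S) :=
  exists u r v, r \in Jgens K n /\ F = word K u * ncseries r * word K v.
Definition chi_gen (F : S) := exists u m, m \in Mgens K n /\ F = word K u * ncseries m.

Definition urel_ideal := lspan urel_gen.
Definition chi_ideal := lspan (fun F => urel_gen F \/ chi_gen F).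

Lemma urel_ideal_sub : {subset urel_ideal <= chi_ideal}.
Proof. by apply: lspan_sub => F; left. Qed.

Lemma urel_ideal_mull x : x \in ncpolys K -> {in urel_ideal, forall y, x * y \in urel_ideal}.
Proof.
move=> hx y hy; apply: ncpolys_mull hx => u; apply: lspan_mull hy => z [u' [r [v [hr ->]]]].
by apply: lspan_gen; exists (u ++ u'), r, v; rewrite word_cat !mulrA.
Qed.

Lemma urel_ideal_mulr x : x \in ncpolys K -> {in urel_ideal, forall y, y * x \in urel_ideal}.
Proof.
move=> hx y hy; apply: ncpolys_mulr hx => u; apply: lspan_mulr hy => z [u' [r [v [hr ->]]]].
by apply: lspan_gen; exists u', r, (v ++ u); rewrite word_cat !mulrA.
Qed.

Lemma chi_ideal_mull x : x \in ncpolys K -> {in chi_ideal, forall y, x * y \in chi_ideal}.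
Proof.
move=> hx y hy; apply: ncpolys_mull hx => u; apply: lspan_mull hy => z [].
  by move=> [u' [r [v [hr ->]]]]; apply: lspan_gen; left; exists (u ++ u'), r, v;
    rewrite word_cat !mulrA.
by move=> [u' [m [hm ->]]]; apply: lspan_gen; right; exists (u ++ u'), m;
  rewrite word_cat mulrA.
Qed.

Lemma urel_in_ideal x y : x \in gens n -> y \in gens n ->
  ncseries (urel K x y) \in urel_ideal.
Proof.
move=> hx hy; apply: lspan_gen; exists [::], (urel K x y), [::].
by rewrite word_nil mul1r mulr1; split=> //; apply: allpairs_f.
Qed.

Lemma chi_in_ideal x : x \in mgens n -> ncseries (ncgen K x) - (chi K x)%:A \in chi_ideal.
Proof.
move=> hx; apply: lspan_gen; right; exists [::], (ncsub (ncgen K x) (ncconst (chi K x))).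
by rewrite word_nil mul1r ncseries_sub ncseries_const; split=> //; apply: map_f.
Qed.

Lemma chi_ideal_inLeftIdeal p : ncseries p \in chi_ideal -> inLeftIdeal n p.
Proof.
move=> /lspanP [s hs].
suff [A [B [hA [hB e]]]] : exists A B, all (fun t => t.1.2 \in Jgens K n) A /\
    all (fun t => t.2 \in Mgens K n) B /\ ncseries p =
    ncseries (ncadd (\big[@ncadd K/[::]]_(t <- A)
          ncscale t.1.1.1 (ncmul (ncmul (ncword K t.1.1.2) t.1.2) (ncword K t.2)))
      (\big[@ncadd K/[::]]_(t <- B) ncscale t.1.1 (ncmul (ncword K t.1.2) t.2))).
  by exists A, B; do 2!split=> //; move=> w; apply: (congr1 (@^~ w) e).
rewrite {}hs; elim: s => [|[c [F hF]] s [A [B [hA [hB e]]]]].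
  by exists [::], [::]; rewrite !big_nil ncseries_add ncseries_nil addr0.
rewrite big_cons {}e /=; case: hF => [[u [r [v [hr ->]]]] | [u [m [hm ->]]]].
  exists ((c, u, r, v) :: A), B; rewrite /= hr hA hB; do 2!split=> //.
  by rewrite !ncseries_add !big_cons ncseries_add ncseries_scale !ncseries_mul addrA.
exists A, ((c, u, m) :: B); rewrite /= hm hA hB; do 2!split=> //.
by rewrite !ncseries_add [in RHS]big_cons ncseries_add ncseries_scale ncseries_mul addrCA.
Qed.

End ChiIdeal.

Arguments urel_ideal : clear implicits.
Arguments chi_ideal : clear implicits.

Lemma piEq_chi_ideal (K : numClosedFieldType) n (p q : ncpoly K) :
  ncseries p - ncseries q \in chi_ideal K n -> piEq n p q.
Proof. by move=> h; apply: chi_ideal_inLeftIdeal; rewrite ncseries_sub. Qed.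

Section SuperCommutator.
Variables (R : comPzRingType) (A : algType R).
Implicit Types x y z : A.

Definition scomm (a b : bool) x y := x * y - (-1) ^+ (a && b) *: (y * x).

Lemma scommMr a b c x y z :
  scomm a (b (+) c) x (y * z) = scomm a b x y * z + (-1) ^+ (a && b) *: (y * scomm a c x z).
Proof.
rewrite /scomm mulrBl mulrBr !scalerBr -scalerAl -!scalerAr scalerA -signr_addb -andb_addr.
by rewrite !mulrA addrA subrK.
Qed.

Lemma scomm_sumr a b x (I : Type) (r : seq I) (P : pred I) (F : I -> A) :
  scomm a b x (\sum_(i <- r | P i) F i) = \sum_(i <- r | P i) scomm a b x (F i).
Proof. by rewrite /scomm mulr_sumr mulr_suml scaler_sumr -sumrB. Qed.

Lemma scommZr a b x c y : scomm a b x (c *: y) = c *: scomm a b x y.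
Proof. by rewrite /scomm scalerBr -scalerAr -scalerAl !scalerA mulrC. Qed.

Lemma scommDr a b x y z : scomm a b x (y + z) = scomm a b x y + scomm a b x z.
Proof. by rewrite /scomm mulrDr mulrDl scalerDr opprD addrACA. Qed.

Lemma mulr_scomm_swap a b x y :
  y * x = (-1) ^+ (a && b) *: (x * y - scomm a b x y).
Proof. by rewrite /scomm opprB addrC subrK scalerA -expr2 sqrr_sign scale1r. Qed.

End SuperCommutator.

Section Sergeev.
Variables (K : numClosedFieldType) (n : nat).
Local Notation S := (series gen K).
Local Notation "x =J y" := (eqmod (urel_ideal K n) x y) (at level 70).
Local Notation "x =I y" := (eqmod (chi_ideal K n) x y) (at level 70).

Definition is_idx i := (0 < i <= n)%N.
Definition basisS b i j : S := ncseries (ncgen K (b, i, j)).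
(* [sergeevS m] is e^{(m+1)}, resp. f^{(m+1)}: the level is shifted by one, as in [serg]. *)
Definition sergeevS m b i j : S := ncseries (serg K n m b i j).

Lemma basisS_ncpoly b i j : basisS b i j \in ncpolys K.
Proof. exact: ncseries_in. Qed.

Lemma sergeevS_ncpoly m b i j : sergeevS m b i j \in ncpolys K.
Proof. exact: ncseries_in. Qed.

Lemma gens_idx b i j : is_idx i -> is_idx j -> (b, i, j) \in gens n.
Proof.
move=> hi hj; have mem_idx k : is_idx k -> k \in iota 1 n by rewrite mem_iota add1n ltnS.
rewrite /gens /= cats0 mem_cat; apply/orP.
by case: b; [right | left]; apply: (allpairs_f (fun k l => (_, k, l))); apply: mem_idx.
Qed.

Lemma mgens_idx b i j : is_idx i -> is_idx j -> (j < i)%N -> (b, i, j) \in mgens n.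
Proof. by move=> hi hj hij; rewrite mem_filter /= hij gens_idx. Qed.

Lemma sergeevS0 b i j : sergeevS 0 b i j = basisS b i j.
Proof. by []. Qed.

Lemma sergeevS_recl m b i j : sergeevS m.+1 b i j =
  \sum_(1 <= k < n.+1) basisS false i k * sergeevS m b k j +
  (-1) ^+ odd m.+1 *: \sum_(1 <= k < n.+1) basisS true i k * sergeevS m (~~ b) k j.
Proof.
rewrite /sergeevS /= ncseries_add ncseries_scale /ncsum !ncseries_big /= negbK.
by congr (_ + _ *: _); apply: eq_bigr => k _; rewrite ncseries_mul.
Qed.

Lemma scomm_basisS a b p q c d : is_idx p -> is_idx q -> is_idx c -> is_idx d ->
  scomm a b (basisS a p q) (basisS b c d) =J
  (q == c)%:R *: basisS (a (+) b) p d - ((-1) ^+ (a && b) * (d == p)%:R) *: basisS (a (+) b) c q.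
Proof.
move=> hp hq hc hd; have := urel_in_ideal K (gens_idx a hp hq) (gens_idx b hc hd).
rewrite /urel /sbracket !ncseries_sub ncseries_scale !ncseries_mul ncseries_add !ncseries_scale.
by rewrite /eqmod /scomm /sgn /delta /parity /= mulNr scaleNr.
Qed.

Lemma eqmodJ_mull x y z : x \in ncpolys K -> y =J z -> x * y =J x * z.
Proof. by move=> hx hyz; rewrite /eqmod -mulrBr; apply: urel_ideal_mull hx _ hyz. Qed.

Lemma eqmodJ_mulr x y z : x \in ncpolys K -> y =J z -> y * x =J z * x.
Proof. by move=> hx hyz; rewrite /eqmod -mulrBl; apply: urel_ideal_mulr hx _ hyz. Qed.

Lemma eqmodI_mull x y z : x \in ncpolys K -> y =I z -> x * y =I x * z.
Proof. by move=> hx hyz; rewrite /eqmod -mulrBr; apply: chi_ideal_mull hx _ hyz. Qed.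

Lemma eqmodJI x y : x =J y -> x =I y.
Proof. exact: urel_ideal_sub. Qed.

Lemma eqmod_sum_idx_range (I : submodClosed S) lo hi (F G : nat -> S) :
  (forall k, (lo <= k < hi)%N -> eqmod I (F k) (G k)) ->
  eqmod I (\sum_(lo <= k < hi) F k) (\sum_(lo <= k < hi) G k).
Proof.
move=> h; rewrite big_seq_cond [X in eqmod _ _ X]big_seq_cond; apply: eqmod_sum => k.
by rewrite mem_index_iota andbT; apply: h.
Qed.

Lemma sum_idx_delta p (F : nat -> S) : is_idx p ->
  \sum_(1 <= k < n.+1) (k == p)%:R *: F k = F p.
Proof.
move=> hp; rewrite (bigD1_seq p) ?mem_index_iota ?iota_uniq //= eqxx scale1r.
by rewrite big1_seq ?addr0 // => k /andP [/negbTE -> _]; rewrite scale0r.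
Qed.

Lemma scomm_basisS_mul_sum m a e b p q c d :
  (forall b c d, is_idx c -> is_idx d ->
    scomm a b (basisS a p q) (sergeevS m b c d) =J
    ((-1) ^+ (a && odd m) * (q == c)%:R) *: sergeevS m (a (+) b) p d -
    ((-1) ^+ (a && b) * (d == p)%:R) *: sergeevS m (a (+) b) c q) ->
  is_idx p -> is_idx q -> is_idx c -> is_idx d ->
  scomm a (e (+) b) (basisS a p q)
    (\sum_(1 <= k < n.+1) basisS e c k * sergeevS m b k d) =J
  (q == c)%:R *: (\sum_(1 <= k < n.+1) basisS (a (+) e) p k * sergeevS m b k d) -
  ((-1) ^+ (a && (e (+) b)) * (d == p)%:R) *:
    (\sum_(1 <= k < n.+1) basisS e c k * sergeevS m (a (+) b) k q) +
  (-1) ^+ (a && e) *: ((-1) ^+ (a && odd m) *: (basisS e c q * sergeevS m (a (+) b) p d) -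
    basisS (a (+) e) c q * sergeevS m b p d).
Proof.
move=> IH hp hq hc hd; rewrite scomm_sumr.
apply: eqmod_trans.
  apply: eqmod_sum_idx_range => k hk; rewrite scommMr.
  apply: eqmodD.
    by apply: eqmodJ_mulr (sergeevS_ncpoly _ _ _ _) (scomm_basisS a e hp hq hc hk).
  by apply/eqmodZ/eqmodJ_mull/IH => //; apply: basisS_ncpoly.
apply: eqmod_eq.
rewrite -(sum_idx_delta (fun k => basisS (a (+) e) c q * sergeevS m b k d) hp).
rewrite -(sum_idx_delta (fun k => basisS e c k * sergeevS m (a (+) b) p d) hq).
rewrite !scaler_sumr -!sumrB !scaler_sumr -big_split /=; apply: eq_bigr => k _.
rewrite mulrBl mulrBr !scalerBr -!scalerAl -!scalerAr !scalerA.
rewrite andb_addr signr_addb !mulrA [k == q]eq_sym addrACA [RHS]addrACA.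
by rewrite [- _ - _]addrC.
Qed.

Lemma sergeevS_recl_twisted m a b p d :
  \sum_(1 <= k < n.+1) basisS a p k * sergeevS m b k d +
  (-1) ^+ odd m.+1 *: \sum_(1 <= k < n.+1) basisS (~~ a) p k * sergeevS m (~~ b) k d =
  (-1) ^+ (a && odd m.+1) *: sergeevS m.+1 (a (+) b) p d.
Proof.
case: a; last by rewrite sergeevS_recl scale1r.
rewrite sergeevS_recl /= negbK scalerDr scalerA -expr2 sqrr_sign scale1r.
by rewrite addrC.
Qed.

Lemma scomm_basisS_sergeevS m a b p q c d : is_idx p -> is_idx q -> is_idx c -> is_idx d ->
  scomm a b (basisS a p q) (sergeevS m b c d) =J
  ((-1) ^+ (a && odd m) * (q == c)%:R) *: sergeevS m (a (+) b) p d -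
  ((-1) ^+ (a && b) * (d == p)%:R) *: sergeevS m (a (+) b) c q.
Proof.
move=> hp hq; elim: m b c d => [|m IH] b c d hc hd.
  by rewrite !sergeevS0 andbF expr0 mul1r; apply: scomm_basisS.
have L0 := scomm_basisS_mul_sum false b IH hp hq hc hd.
have L1 := scomm_basisS_mul_sum true (~~ b) IH hp hq hc hd.
rewrite addFb addbF andbF expr0 scale1r in L0.
rewrite addTb negbK addbT in L1.
rewrite sergeevS_recl scommDr scommZr.
apply: eqmod_trans (eqmodD L0 (eqmodZ _ L1)) _; apply: eqmod_eq.
have lin3 (x0 y0 z0 x1 y1 z1 : S) (u v t : K) :
    u *: x0 - v *: y0 + z0 + t *: (u *: x1 - v *: y1 + z1) =
    u *: (x0 + t *: x1) - v *: (y0 + t *: y1) + (z0 + t *: z1).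
  rewrite !scalerDr !scalerN !scalerA [t * u]mulrC [t * v]mulrC.
  by rewrite addrACA [_ - _ + (_ - _)]addrACA -opprD.
(* The terms coming from the Kronecker deltas of the two halves of the recursion cancel. *)
have cross : (-1) ^+ (a && odd m) *: (basisS false c q * sergeevS m (a (+) b) p d) -
    basisS a c q * sergeevS m b p d + (-1) ^+ odd m.+1 *: ((-1) ^+ (a && true) *:
    ((-1) ^+ (a && odd m) *: (basisS true c q * sergeevS m (a (+) ~~ b) p d) -
     basisS (~~ a) c q * sergeevS m (~~ b) p d)) = 0.
  case: (a) => /=; last by rewrite expr0 !scale1r !subrr scaler0 addr0.
  rewrite negbK signrN expr1 scaleN1r scaleNr scalerN opprK scalerBr scalerA.
  by rewrite -expr2 sqrr_sign scale1r addrA subrK subrr.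
rewrite lin3 cross addr0 sergeevS_recl_twisted addbN -sergeevS_recl.
by rewrite scalerA mulrC.
Qed.

(* This recursion holds already in the tensor algebra. *)
Lemma sergeevS_recr m b i j : sergeevS m.+1 b i j =
  \sum_(1 <= k < n.+1) sergeevS m false i k * basisS b k j -
  \sum_(1 <= k < n.+1) sergeevS m true i k * basisS (~~ b) k j.
Proof.
elim: m b i j => [|m IH] b i j; first by rewrite sergeevS_recl expr1 scaleN1r.
have expand c (Y : nat -> S) : \sum_(1 <= k < n.+1) sergeevS m.+1 c i k * Y k =
    \sum_(1 <= l < n.+1) basisS false i l * \sum_(1 <= k < n.+1) sergeevS m c l k * Y k +
    (-1) ^+ odd m.+1 *: \sum_(1 <= l < n.+1) basisS true i l *
      \sum_(1 <= k < n.+1) sergeevS m (~~ c) l k * Y k.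
  rewrite (eq_bigr (fun k =>
     \sum_(1 <= l < n.+1) basisS false i l * (sergeevS m c l k * Y k) +
     (-1) ^+ odd m.+1 *: \sum_(1 <= l < n.+1) basisS true i l * (sergeevS m (~~ c) l k * Y k)));
    last by move=> k _; rewrite sergeevS_recl mulrDl -scalerAl !mulr_suml;
      congr (_ + _ *: _); apply: eq_bigr => l _; rewrite mulrA.
  rewrite big_split -scaler_sumr; congr (_ + _ *: _);
    by rewrite exchange_big; apply: eq_bigr => l _; rewrite mulr_sumr.
rewrite sergeevS_recl (expand false (basisS b ^~ j)) (expand true (basisS (~~ b) ^~ j)).
under eq_bigr do rewrite IH mulrBr.
under [in X in _ + X]eq_bigr do rewrite IH mulrBr.
rewrite !sumrB negbK /= signrN scalerBr !scaleNr.
by rewrite opprK [- _ + _]addrC addrACA opprD.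
Qed.

Lemma basisS_chi b i j : is_idx i -> is_idx j -> (j < i)%N ->
  basisS b i j =I ((~~ b) && (i == j.+1))%:R.
Proof.
move=> hi hj hij; have := chi_in_ideal K (mgens_idx b hi hj hij).
by rewrite /eqmod /chi /delta; case: b; rewrite /= ?scale0r // scaler_nat.
Qed.

(* For k <= j, x_{kj} is moved to the left of y^{(m)}_{ik}, which is then a constant; for k > j,
   x_{kj} lies in m and is replaced by chi(x_{kj}). *)
Lemma sum_sergeevS_basisS m c e i j :
  (forall b k, is_idx k -> (k + m < i)%N ->
    sergeevS m b i k =I ((~~ b) && (i == (k + m).+1))%:R) ->
  is_idx i -> is_idx j -> (j + m < i)%N ->
  \sum_(1 <= k < n.+1) sergeevS m c i k * basisS e k j =I
  \sum_(1 <= k < j.+1) ((-1) ^+ (e && c) *: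
      (((~~ c) && (i == (k + m).+1))%:R *: basisS e k j) + sergeevS m (e (+) c) i j) +
  (~~ e)%:R *: sergeevS m c i j.+1.
Proof.
move=> lower hi hj hjm; move: (hi) (hj); rewrite /is_idx => /andP [i_gt0 i_le_n] _.
have ji : (j < i)%N by lia.
rewrite (@big_cat_nat _ _ _ j.+1) //=; last by lia.
apply: eqmodD.
  apply: eqmod_sum_idx_range => k /andP [k_gt0 kj].
  have hk : is_idx k by rewrite /is_idx; lia.
  have comm := scomm_basisS_sergeevS m e c hk hj hi hk.
  rewrite (ltn_eqF ji) eqxx mulr0 mulr1 scale0r sub0r in comm.
  rewrite (mulr_scomm_swap e c (basisS e k j)) [X in _ =I X](_ : _ = (-1) ^+ (e && c) *:
      (basisS e k j * ((~~ c) && (i == (k + m).+1))%:R -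
       - ((-1) ^+ (e && c) *: sergeevS m (e (+) c) i j))).
    apply/eqmodZ/eqmodB; last exact: eqmodJI.
    by apply/eqmodI_mull/lower => //; [apply: basisS_ncpoly | lia].
  by rewrite opprK scalerDr scalerA -expr2 sqrr_sign scale1r mulr_natr -scaler_nat.
apply: eqmod_trans.
  apply: eqmod_sum_idx_range => k /andP [jk kn].
  have hk : is_idx k by rewrite /is_idx; lia.
  by apply: eqmodI_mull (sergeevS_ncpoly _ _ _ _) (basisS_chi e hk hj jk).
apply: eqmod_eq; rewrite big_ltn; last by lia.
rewrite eqxx andbT big_nat_cond big1 ?addr0 => [|k]; first by rewrite mulr_natr -scaler_nat.
by case/andP => /andP [/gtn_eqF -> _] _; rewrite andbF mulr0.
Qed.

Lemma sergeevS_lower_step m b i j :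
  (forall b k, is_idx k -> (k + m < i)%N ->
    sergeevS m b i k =I ((~~ b) && (i == (k + m).+1))%:R) ->
  is_idx i -> is_idx j -> (j + m < i)%N ->
  sergeevS m.+1 b i j =I
  (-1) ^+ b *: sergeevS m b i j.+1 + \sum_(1 <= k < j.+1) (i == (k + m).+1)%:R *: basisS b k j.
Proof.
move=> lower hi hj hjm; rewrite sergeevS_recr.
apply: eqmod_trans.
  by apply: eqmodB; apply: sum_sergeevS_basisS.
apply: eqmod_eq; rewrite /= andbF andbT addbF addbT negbK expr0.
under eq_bigr do rewrite scale1r.
under [in X in _ - (X + _)]eq_bigr do rewrite scale0r scaler0 add0r.
rewrite big_split /= opprD addrACA addrK addrC.
by case: b; rewrite /= ?mulr1n ?mulr0n ?scale1r ?scale0r ?expr0 ?expr1 ?scaleN1r ?subr0 ?sub0r.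
Qed.

Lemma sergeevS_lower m b i j : is_idx i -> is_idx j -> (j + m < i)%N ->
  sergeevS m b i j =I ((~~ b) && (i == (j + m).+1))%:R.
Proof.
elim: m b i j => [|m IH] b i j hi hj hjm; first by rewrite sergeevS0 addn0 basisS_chi // -[j]addn0.
apply: eqmod_trans (sergeevS_lower_step b (fun b' k => IH b' i k hi) hi hj _) _; first by lia.
have hj1 : is_idx j.+1 by move: hi hj; rewrite /is_idx; lia.
apply: eqmod_trans.
  by apply/eqmodD/eqmod_refl/eqmodZ/IH => //; lia.
apply: eqmod_eq; rewrite big_nat_cond big1 ?addr0 => [|k /andP [/andP [_ hk] _]].
  by rewrite addSnnS; case: b; rewrite ?scale1r ?expr1 ?scaleN1r ?oppr0.
have -> : (i == (k + m).+1) = false by lia.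
by rewrite /= mulr0n scale0r.
Qed.

Lemma sergeevS_diag m b j : is_idx j -> is_idx (j + m) ->
  sergeevS m b (j + m) j =I
  \sum_(0 <= t < m.+1) (-1) ^+ (b && odd t) *: basisS b (j + t) (j + t).
Proof.
elim: m j => [|m IH] j hj hjm.
  by apply: eqmod_eq; rewrite big_nat1 sergeevS0 addn0 andbF expr0 scale1r.
apply: eqmod_trans (sergeevS_lower_step b (fun b' k => sergeevS_lower b' hjm) hjm hj _) _.
  by lia.
have hj1 : is_idx j.+1 by move: hj hjm; rewrite /is_idx; lia.
apply: eqmod_trans.
  apply/eqmodD/eqmod_refl/eqmodZ; rewrite addnS -addSn; apply: IH => //.
  by rewrite addSn -addnS.
have sum_diag : \sum_(1 <= k < j.+1) (j + m.+1 == (k + m).+1)%N%:R *: basisS b k j = basisS b j j.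
  have j_gt0 : (0 < j)%N by case/andP: hj.
  rewrite big_nat_recr // addnS eqxx scale1r big_nat_cond big1 => [|k]; first exact: add0r.
  by case/andP => /andP [_ hk] _; rewrite eqSS eqn_add2r (gtn_eqF hk) /= mulr0n scale0r.
apply: eqmod_eq; rewrite sum_diag.
rewrite [RHS]big_nat_recl // addn0 andbF expr0 scale1r addrC scaler_sumr; congr (_ + _).
apply: eq_bigr => t _; rewrite scalerA -signr_addb addnS -addSn oddS.
by case: (b); case: (odd t).
Qed.

Lemma sergeevS_top b : (0 < n)%N ->
  sergeevS n.-1 b n 1 =I \sum_(1 <= i < n.+1) (-1) ^+ (b && odd i.-1) *: basisS b i i.
Proof.
move=> n_gt0; have h1 : is_idx 1 by rewrite /is_idx; lia.
have hn : is_idx (1 + n.-1) by rewrite /is_idx; lia.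
have := sergeevS_diag b h1 hn; rewrite add1n prednK // => /eqmod_trans; apply.
by apply: eqmod_eq; rewrite big_add1 succnK; apply: eq_bigr => t _; rewrite add1n.
Qed.

End Sergeev.

Theorem lemma4p6 (K : numClosedFieldType) (n : nat) (hn : (0 < n)%N) :
  piEq n (sergeev K n n false n 1) (zel K n) /\
  piEq n (sergeev K n n true n 1) (H0 K n).
Proof.
split; apply: piEq_chi_ideal; rewrite /zel /H0 /ncsum ncseries_big.
  rewrite (eq_bigr (fun i => (-1) ^+ (false && odd i.-1) *: basisS K false i i)) => [|i _].
    exact: sergeevS_top.
  by rewrite /= expr0 scale1r.
rewrite (eq_bigr (fun i => (-1) ^+ (true && odd i.-1) *: basisS K true i i)) => [|i _].
  exact: sergeevS_top.
by rewrite ncseries_scale.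
Qed.
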